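(* Let $(X,r)$ be a non-degenerate involutive set-theoretic solution with $|X|=n$, identified with $\{1,\dots,n\}$, with table $\mathcal{T}$, and let $(\mathcal{X}^2,\tilde r)$ be the induced pair. Let $\mathrm{Orb}(T_1^1)$ be the orbit of $T_1^1$ under the action of the structure group $G(\mathcal{X}^2,\tilde r)$ on $\mathcal{X}^2$. The following are equivalent: (i) $(\mathcal{X}^2,\tilde r)$ is indecomposable; (ii) $\mathrm{Orb}(T_1^1)=\mathcal{X}^2$; (iii) for every $1\le s,m\le n$ there exist a natural number $\ell$ and $1\le i_1,\dots,i_\ell,k_1,\dots,k_\ell\le n$ such that $\sigma_{i_1}\sigma_{i_2}\cdots\sigma_{i_\ell}(1)=s$ and $\sigma_{k_1}\sigma_{k_2}\cdots\sigma_{k_\ell}(1)=m$; (iv) for every $1\le s,m\le n$ there exists a natural number $\ell$ such that $s$ and $m$ both appear in column $\ell$ of $\mathcal{T}$.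
   Context: A set-theoretic solution is $r:X\times X\to X\times X$, $r(x,y)=(\sigma_x(y),\gamma_y(x))$, with $r^{12}r^{23}r^{12}=r^{23}r^{12}r^{23}$; non-degenerate: all $\sigma_x,\gamma_x$ bijective; involutive: $r\circ r=\mathrm{Id}$. Induced pair: $\mathcal{X}^2=\{T_i^k:1\le i,k\le n\}$ ($n^2$ symbols), $\tilde r(T_i^k,T_j^l)=(g_i^k(T_j^l),f_j^l(T_i^k))$ with $g_i^k(T_j^l)=T_{\sigma_i(j)}^{\sigma_k(l)}$, $f_j^l(T_i^k)=T_{\gamma_j(i)}^{\gamma_l(k)}$; it is a non-degenerate involutive solution. The structure group of a solution $(Y,s)$ with $s(x,y)=(\alpha_x(y),\beta_y(x))$ is $G(Y,s)=\langle Y\mid xy=\alpha_x(y)\beta_y(x),\ x,y\in Y\rangle$; it acts on $Y$ with generator $x$ acting as $\alpha_x$ (so for $G(\mathcal{X}^2,\tilde r)$, the generator $T_i^k$ acts as $g_i^k$). A subset $Z$ is non-degenerate invariant if $s(Z\times Z)\subseteq Z\times Z$ and the restriction is a non-degenerate involutive solution; a solution is decomposable if it is a union of two non-empty disjoint non-degenerate invariant subsets, indecomposable otherwise. The table $\mathcal{T}$ of $(X,r)$ has columns indexed by natural numbers $\ell\ge1$, and column $\ell$ consists of all $s\in X$ for which there exist $1\le i_1,\dots,i_\ell\le n$ with $\sigma_{i_1}\sigma_{i_2}\cdots\sigma_{i_\ell}(1)=s$. *)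

From mathcomp Require Import all_boot.
Set Implicit Arguments. Unset Strict Implicit. Unset Printing Implicit Defensive.

(* A map s : Y*Y -> Y*Y, s(x,y) = (alpha x y, beta y x), on a finite type Y. *)
Section Solutions.
Variable Y : finType.
Variables (alpha beta : Y -> Y -> Y).

Definition s12 (t : Y * Y * Y) : Y * Y * Y :=
  let: (x, y, z) := t in (alpha x y, beta y x, z).
Definition s23 (t : Y * Y * Y) : Y * Y * Y :=
  let: (x, y, z) := t in (x, alpha y z, beta z y).

Definition ybe_on (Z : {set Y}) : Prop :=
  forall x y z, x \in Z -> y \in Z -> z \in Z ->
    s12 (s23 (s12 (x, y, z))) = s23 (s12 (s23 (x, y, z))).

Definition involutive_on (Z : {set Y}) : Prop :=
  forall x y, x \in Z -> y \in Z ->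
    alpha (alpha x y) (beta y x) = x /\ beta (beta y x) (alpha x y) = y.

Definition bij_on (Z : {set Y}) (f : Y -> Y) : Prop :=
  (forall y, y \in Z -> f y \in Z) /\
  {in Z &, injective f} /\
  (forall z, z \in Z -> exists2 y, y \in Z & f y = z).

Definition nondeg_on (Z : {set Y}) : Prop :=
  forall x, x \in Z -> bij_on Z (alpha x) /\ bij_on Z (beta x).

Definition nd_inv_solution_on (Z : {set Y}) : Prop :=
  [/\ ybe_on Z, involutive_on Z & nondeg_on Z].

Definition nd_inv_solution : Prop := nd_inv_solution_on [set: Y].

Definition nd_invariant (Z : {set Y}) : Prop :=
  (forall x y, x \in Z -> y \in Z -> alpha x y \in Z /\ beta y x \in Z) /\
  nd_inv_solution_on Z.

Definition decomposable : Prop :=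
  exists Z1 Z2 : {set Y},
    [/\ Z1 != set0, Z2 != set0, [disjoint Z1 & Z2], Z1 :|: Z2 = [set: Y]
      & nd_invariant Z1 /\ nd_invariant Z2].

Definition indecomposable : Prop := ~ decomposable.

(* Orbit of y0 under the action of the structure group G(Y,s), in which the
   generator x acts as alpha x: the smallest set containing y0 and closed
   under every alpha x and every (alpha x)^-1. *)
Inductive orbit (y0 : Y) : Y -> Prop :=
  | orbit_base : orbit y0 y0
  | orbit_gen : forall x y, orbit y0 y -> orbit y0 (alpha x y)
  | orbit_inv : forall x y, orbit y0 (alpha x y) -> orbit y0 y.

End Solutions.

(* Induced pair on X^2 = X * X, where T_i^k is the pair (i, k). *)
Section Induced.
Variable X : finType.
Variables (sigma gamma : X -> X -> X).

Definition ind_g (ik jl : X * X) : X * X := (sigma ik.1 jl.1, sigma ik.2 jl.2).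
Definition ind_f (jl ik : X * X) : X * X := (gamma jl.1 ik.1, gamma jl.2 ik.2).

Definition apply_word (w : seq X) (x : X) : X := foldr (fun i acc => sigma i acc) x w.

(* s lies in column l of the table (base point x1 = "1") *)
Definition in_column (x1 : X) (l : nat) (s : X) : Prop :=
  exists w : seq X, size w = l /\ apply_word w x1 = s.
(* Orb(T_1^1): orbit of T_1^1 = (x1, x1) under G(X^2, r~), generator T_i^k acting as g_i^k *)
Definition ind_orbit (x1 : X) (T : X * X) : Prop := orbit ind_g (x1, x1) T.

Definition ind_indecomposable : Prop := indecomposable ind_g ind_f.
End Induced.

From Pilot Require Import Defs.
From mathcomp Require Import all_boot boolp.

Set Implicit Arguments.
Unset Strict Implicit.
Unset Printing Implicit Defensive.

(* Since every sigma_i permutes the finite set X, the orbit of T_1^1 under the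
   structure group of the induced pair is reached by positive words alone, i.e.
   it consists of the pairs (sigma_{i_1}...sigma_{i_l}(1), sigma_{k_1}...sigma_{k_l}(1))
   given by two words of equal length; this is (ii) <-> (iii).  Appending a
   power of sigma_1 that fixes 1 makes any common length positive, whence
   (iii) <-> (iv).  For (i) <-> (ii): in a non-degenerate involutive solution,
   involutivity gives beta_y(x) = alpha_{alpha_x(y)}^-1(x), so any union of
   alpha-orbits is non-degenerate invariant; conversely both halves of a
   decomposition are unions of alpha-orbits.  Hence the solution is
   indecomposable exactly when the action is transitive. *)

Lemma bij_onTP (Y : finType) (f : Y -> Y) : bij_on [set: Y] f <-> bijective f.
Proof.
split=> [[_ [f_inj _]] | [g fK gK]].
  by apply: injF_bij => x y; apply: f_inj; rewrite inE.
split=> //; split=> [x y _ _ /(can_inj fK) // | z _].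
by exists (g z); rewrite ?inE ?gK.
Qed.

Lemma bij_pair (A B : Type) (f : A -> A) (g : B -> B) :
  bijective f -> bijective g -> bijective (fun p : A * B => (f p.1, g p.2)).
Proof.
move=> [f' fK Kf] [g' gK Kg].
by exists (fun p => (f' p.1, g' p.2)) => -[a b] /=; rewrite ?fK ?gK ?Kf ?Kg.
Qed.

Section Orbits.
Variables (Y : finType) (alpha : Y -> Y -> Y).

Definition alpha_invariant (Z : {set Y}) : Prop :=
  forall x y, (alpha x y \in Z) = (y \in Z).

Lemma orbit_sub (Z : {set Y}) y0 y :
  alpha_invariant Z -> y0 \in Z -> Defs.orbit alpha y0 y -> y \in Z.
Proof.
by move=> Zinv y0Z; elim=> // x z _; rewrite Zinv.
Qed.

Definition orbit_set (y0 : Y) : {set Y} := [set y | `[< Defs.orbit alpha y0 y >]].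

Lemma orbit_set_alpha_invariant y0 : alpha_invariant (orbit_set y0).
Proof.
move=> x y; rewrite !inE; apply/asboolP/asboolP; [exact: orbit_inv | exact: orbit_gen].
Qed.

Lemma apply_word_cat w1 w2 y :
  apply_word alpha (w1 ++ w2) y = apply_word alpha w1 (apply_word alpha w2 y).
Proof. exact: foldr_cat. Qed.

Lemma apply_word_nseq k x y : apply_word alpha (nseq k x) y = iter k (alpha x) y.
Proof. by elim: k => //= k ->. Qed.

Hypothesis alpha_inj : forall x, injective (alpha x).

Lemma orbitP y0 y : Defs.orbit alpha y0 y <-> exists w, apply_word alpha w y0 = y.
Proof.
split=> [|[w <-]]; last by elim: w => [|x w] /=; [exact: orbit_base | exact: orbit_gen].
elim=> [|x z _ [w <-]|x z _ [w e]]; first by exists [::].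
  by exists (x :: w).
(* the inverse of alpha x is one of its positive powers *)
exists (nseq (order (alpha x) (alpha x z)).-1 x ++ w).
by rewrite apply_word_cat e apply_word_nseq; exact: finv_f.
Qed.

Lemma in_column_pad x1 l s i :
  in_column alpha x1 l s -> in_column alpha x1 (l + order (alpha i) x1) s.
Proof.
case=> w [<- <-]; exists (w ++ nseq (order (alpha i) x1) i).
by rewrite size_cat size_nseq apply_word_cat apply_word_nseq iter_order.
Qed.

End Orbits.

Section Indecomposability.
Variables (Y : finType) (alpha beta : Y -> Y -> Y).
Hypothesis sol : nd_inv_solution alpha beta.

Lemma alpha_bij x : bijective (alpha x).
Proof. by case: sol => _ _ /(_ x (in_setT x)) [/bij_onTP]. Qed.

Lemma beta_bij x : bijective (beta x).
Proof. by case: sol => _ _ /(_ x (in_setT x)) [_ /bij_onTP]. Qed.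

Lemma alpha_alpha_beta x y : alpha (alpha x y) (beta y x) = x.
Proof. by case: sol => _ /(_ x y (in_setT x) (in_setT y)) []. Qed.

Lemma beta_beta_alpha x y : beta (beta y x) (alpha x y) = y.
Proof. by case: sol => _ /(_ x y (in_setT x) (in_setT y)) []. Qed.

Lemma nd_invariant_of_alpha_invariant (Z : {set Y}) :
  alpha_invariant alpha Z -> nd_invariant alpha beta Z.
Proof.
move=> Zinv.
have betaZ x y : x \in Z -> beta y x \in Z.
  by move=> xZ; rewrite -(Zinv (alpha x y)) alpha_alpha_beta.
case: sol => ybe inv _.
split; first by move=> x y xZ yZ; rewrite Zinv; split; last exact: betaZ.
split=> [x y z _ _ _ | x y _ _ | x xZ].
- by apply: ybe; rewrite inE.
- by apply: inv; rewrite inE.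
have [ga aK Ka] := alpha_bij x; have [gb bK Kb] := beta_bij x.
split; split=> [y yZ | ]; rewrite ?Zinv ?betaZ //; split.
+ by move=> y z _ _ /(can_inj aK).
+ by move=> z zZ; exists (ga z); rewrite // -(Zinv x) Ka.
+ by move=> y z _ _ /(can_inj bK).
+ by move=> z zZ; exists (gb z); rewrite // -(alpha_alpha_beta (gb z) x) Kb Zinv.
Qed.

Lemma nd_invariant_alpha_closed (Z : {set Y}) x y :
  nd_invariant alpha beta Z -> x \in Z -> (alpha x y \in Z) = (y \in Z).
Proof.
move=> [clZ [_ _ ndZ]] xZ; apply/idP/idP => [axyZ | yZ]; last first.
  by have [] := clZ x y xZ yZ.
have [[_ [_ surj]] _] := ndZ x xZ; have [z zZ e] := surj _ axyZ.
by rewrite -(bij_inj (alpha_bij x) e).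
Qed.

Lemma partition_alpha_invariant (Z1 Z2 : {set Y}) :
  [disjoint Z1 & Z2] -> Z1 :|: Z2 = [set: Y] ->
  nd_invariant alpha beta Z1 -> nd_invariant alpha beta Z2 -> alpha_invariant alpha Z1.
Proof.
move=> dis U nd1 nd2 x y.
have Z2E : Z2 = ~: Z1.
  apply/setP=> z; rewrite inE; have := in_setT z; rewrite -U in_setU.
  by case: (boolP (z \in Z1)) => [/(disjointFr dis) -> | _ /= ->].
have [xZ1 | xZ1] := boolP (x \in Z1); first exact: nd_invariant_alpha_closed.
apply: negb_inj; rewrite -!in_setC -Z2E.
by apply: nd_invariant_alpha_closed; rewrite // Z2E inE.
Qed.

Theorem indecomposable_iff_orbit_full y0 :
  indecomposable alpha beta <-> forall y, Defs.orbit alpha y0 y.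
Proof.
split=> [indec y | full [Z1 [Z2 [nZ1 nZ2 dis U [nd1 nd2]]]]].
  have [OC0 | OCn0] := eqVneq (~: orbit_set alpha y0) set0.
    by move: (in_setT y); rewrite -setC0 -OC0 setCK inE => /asboolP.
  case: indec; exists (orbit_set alpha y0), (~: orbit_set alpha y0); split=> //.
  - by apply/set0Pn; exists y0; rewrite inE; apply/asboolP; exact: orbit_base.
  - by rewrite disjoints_subset setCK.
  - exact: setUCr.
  - split; apply: nd_invariant_of_alpha_invariant => x z.
      exact: orbit_set_alpha_invariant.
    by rewrite !in_setC orbit_set_alpha_invariant.
wlog y0Z1 : Z1 Z2 nZ1 nZ2 dis U nd1 nd2 / y0 \in Z1.
  move=> gen; have : y0 \in Z1 :|: Z2 by rewrite U inE.
  case/setUP=> [|y0Z2]; first exact: (gen Z1 Z2).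
  by apply: (gen Z2 Z1); rewrite // (disjoint_sym, setUC).
have [y yZ2] := set0Pn _ nZ2.
have := orbit_sub (partition_alpha_invariant dis U nd1 nd2) y0Z1 (full y).
by rewrite (disjointFl dis yZ2).
Qed.

End Indecomposability.

Section InducedPair.
Variables (X : finType) (sigma gamma : X -> X -> X).

Lemma ind_nd_inv_solution :
  nd_inv_solution sigma gamma -> nd_inv_solution (ind_g sigma) (ind_f gamma).
Proof.
move=> sol; case: (sol) => ybe _ _; split.
- move=> [x1 x2] [y1 y2] [z1 z2] _ _ _.
  have := ybe x1 y1 z1 (in_setT _) (in_setT _) (in_setT _).
  have := ybe x2 y2 z2 (in_setT _) (in_setT _) (in_setT _).
  by rewrite /s12 /s23 /ind_g /ind_f /= => -[-> -> ->] [-> -> ->].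
- move=> [x1 x2] [y1 y2] _ _; rewrite /ind_g /ind_f /=.
  by rewrite !(alpha_alpha_beta sol) !(beta_beta_alpha sol).
- have [abij bbij] := (alpha_bij sol, beta_bij sol).
  by move=> [x1 x2] _; split; apply/bij_onTP; apply: bij_pair.
Qed.

Lemma apply_word_ind_g w a b :
  apply_word (ind_g sigma) w (a, b) =
  (apply_word sigma (unzip1 w) a, apply_word sigma (unzip2 w) b).
Proof. by elim: w => //= -[i k] w ->. Qed.

Hypothesis sigma_inj : forall i, injective (sigma i).

Lemma ind_orbitP x1 s m :
  ind_orbit sigma x1 (s, m) <->
  exists iw kw, [/\ size iw = size kw, apply_word sigma iw x1 = s & apply_word sigma kw x1 = m].
Proof.
have ind_g_inj T : injective (ind_g sigma T).
  by move=> [a1 a2] [b1 b2] [/sigma_inj -> /sigma_inj ->].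
rewrite /ind_orbit orbitP //; split=> [[w] | [iw [kw [e <- <-]]]].
  rewrite apply_word_ind_g => -[<- <-].
  by exists (unzip1 w), (unzip2 w); rewrite !size_map.
by exists (zip iw kw); rewrite apply_word_ind_g unzip1_zip ?unzip2_zip ?e.
Qed.

End InducedPair.

Theorem lemma3p11 (n : nat) (sigma gamma : 'I_n.+1 -> 'I_n.+1 -> 'I_n.+1) :
  nd_inv_solution sigma gamma ->
  let one := (ord0 : 'I_n.+1) in
  let P1 := ind_indecomposable sigma gamma in
  let P2 := forall T : 'I_n.+1 * 'I_n.+1, ind_orbit sigma one T in
  let P3 := forall s m : 'I_n.+1, exists l : nat, exists iw kw : seq 'I_n.+1,
              [/\ size iw = l, size kw = l,
                  apply_word sigma iw one = s & apply_word sigma kw one = m] in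
  let P4 := forall s m : 'I_n.+1, exists l : nat,
              1 <= l /\ in_column sigma one l s /\ in_column sigma one l m in
  [/\ P1 <-> P2, P2 <-> P3 & P3 <-> P4].
Proof.
move=> sol one P1 P2 P3 P4.
have sigma_inj i : injective (sigma i) by apply: bij_inj; exact: alpha_bij sol i.
split.
- exact: indecomposable_iff_orbit_full (ind_nd_inv_solution sol) (one, one).
- split=> [full s m | words [s m]].
    have [iw [kw [e <- <-]]] := (ind_orbitP sigma_inj one s m).1 (full (s, m)).
    by exists (size iw), iw, kw.
  have [l [iw [kw [<- e <- <-]]]] := words s m.
  by apply/ind_orbitP => //; exists iw, kw.
- split=> [words s m | columns s m].
    have [l [iw [kw [? ? ? ?]]]] := words s m.
    exists (l + order (sigma one) one); rewrite addn_gt0 order_gt0 orbT.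
    by split=> //; split; apply: (in_column_pad sigma_inj); [exists iw | exists kw].
  have [l [_ [[iw [? ?]] [kw [? ?]]]]] := columns s m.
  by exists l, iw, kw.
Qed.
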